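(* For every $N\ge 1$, the (free) Magnetic Tower of Hanoi puzzle with $N$ disks can be solved in $$S_{67}(N)=3^{N-1}+N-1$$ moves, by a solution in which disk $1$ moves once and disk $k$ moves $2\cdot 3^{k-2}+1$ times for $2\le k\le N$ (disks numbered $1,\dots,N$ from largest to smallest). Moreover $S_{67}(N)\big/\tfrac{3^N-1}{2}\to \tfrac23$ as $N\to\infty$.
   Context: Magnetic Tower of Hanoi (MToH): there are three posts and $N$ disks of distinct diameters, numbered $1$ (largest) to $N$ (smallest). Each disk has two faces, one Red and one Blue. Initially all $N$ disks are stacked on a source post $S$ in decreasing size from bottom to top, each with its Red face up. A move consists of lifting the top disk of some post, turning it upside down, and placing it on top of another post. Rules: (Size rule) a disk may never be placed on a smaller disk; (Magnet rule) a disk may never be placed so that its downward-facing side has the same color as the upward-facing side of the disk it lands on. An empty post accepts a disk in either orientation. The puzzle is solved when all $N$ disks are on a destination post $D$ (one of the two initially empty posts) in decreasing size from bottom to top. *)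

From Stdlib Require Import Reals.
From mathcomp Require Import all_boot.
Set Implicit Arguments. Unset Strict Implicit. Unset Printing Implicit Defensive.

(* Disks are numbered 1 (largest) .. N (smallest); disk i is larger than
   disk j iff i < j.  A disk on a post is recorded together with its
   upward-facing colour: [true] = Red face up, [false] = Blue face up.
   A post is a stack, listed from TOP to BOTTOM. *)
Definition disk := (nat * bool)%type.
Definition config := 'I_3 -> seq disk.

(* A move: lift the top disk of post [p.1], turn it upside down, put it on
   post [p.2]. *)
Definition move := ('I_3 * 'I_3)%type.

(* With up-colour r before the move, after
   turning it over its downward face has colour r; it may land on a disk with
   up-colour r' only if r != r' (magnet rule) and that disk is larger
   (size rule). *)
Definition step (c : config) (m : move) : option (config * nat) :=
  let: (p, q) := m in
  if p == q then None else
  match c p with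
  | [::] => None
  | (d, r) :: rest =>
      let ok := match c q with
                | [::] => true
                | (d', r') :: _ => (d' < d) && (r != r')
                end in
      if ok then
        Some ((fun x : 'I_3 => if x == p then rest
                               else if x == q then (d, ~~ r) :: c q
                               else c x), d)
      else None
  end.

Fixpoint run (c : config) (ms : seq move) : option (config * seq nat) :=
  match ms with
  | [::] => Some (c, [::])
  | m :: ms' =>
      match step c m with
      | None => None
      | Some (c', d) =>
          match run c' ms' with
          | None => None
          | Some (cf, ds) => Some (cf, d :: ds)
          end
      end
  end.

Definition init (N : nat) (S : 'I_3) : config :=
  fun x => if x == S then [seq (i, true) | i <- rev (iota 1 N)] else [::].

Definition solved (N : nat) (D : 'I_3) (c : config) : Prop :=
  map fst (c D) = rev (iota 1 N) /\ forall x : 'I_3, x != D -> c x = [::].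

Definition S67 (N : nat) : nat := 3 ^ (N - 1) + N - 1.

From Stdlib Require Import Reals Lra.
From mathcomp Require Import all_boot zify.
Set Implicit Arguments. Unset Strict Implicit. Unset Printing Implicit Defensive.

(* Put the three posts on a line a - m - b and move disks only between
   neighbours. Then every disk shows one colour on the end posts and the other
   on the middle post, the magnet rule becomes vacuous, and the linear Tower of
   Hanoi recursions apply: a tower of n disks goes from one end to the other
   with 2 * 3^i moves of its disk at height i, and between an end and the middle
   with 3^i such moves.
   The solution moves the largest disk once, from S to D. Beforehand the other
   disks are parked on the third post with their colours restored, which moves
   the bottom disk of the parked tower twice and its disk at height i >= 1
   4 * 3^(i-1) times; afterwards the parked tower is solved recursively onto D.
   So disk k >= 2 is parked once at each height 0, ..., k - 2 and then moves
   once itself: 2 + 4 * (3^0 + ... + 3^(k-3)) + 1 = 2 * 3^(k-2) + 1 moves. *)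

Definition tower (k n : nat) (col : bool) : seq disk :=
  [seq (i, col) | i <- rev (iota k n)].

Lemma towerS k n col : tower k n.+1 col = tower k.+1 n col ++ [:: (k, col)].
Proof. by rewrite /tower /= rev_cons map_rcons cats1. Qed.

(* Legal stacks show a single up-colour: the magnet rule makes the lower face
   of a disk differ from the upper face of the disk beneath it. *)
Definition landable (k : nat) (col : bool) (s : seq disk) : bool :=
  if s is (d, r) :: _ then (d < k) && (r == col) else true.

Lemma landableS k col s : landable k col s -> landable k.+1 col s.
Proof. by case: s => [|[d r] s] //= /andP[lt_dk ->]; rewrite ltnS ltnW. Qed.

Lemma landable_cons k col s : landable k.+1 col ((k, col) :: s).
Proof. by rewrite /= ltnSn eqxx. Qed.

Definition update (c : config) (a b : 'I_3) (s t : seq disk) : config :=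
  fun x => if x == a then s else if x == b then t else c x.

Lemma update_src c a b s t : update c a b s t a = s.
Proof. by rewrite /update eqxx. Qed.

Lemma update_dst c a b s t : a != b -> update c a b s t b = t.
Proof. by move=> neq_ab; rewrite /update eq_sym (negbTE neq_ab) eqxx. Qed.

Lemma update_other c a b s t x : a != x -> b != x -> update c a b s t x = c x.
Proof.
by move=> neq_ax neq_bx; rewrite /update eq_sym (negbTE neq_ax) eq_sym (negbTE neq_bx).
Qed.

Lemma step_top c a b k col rest :
  a != b -> c a = (k, col) :: rest -> landable k (~~ col) (c b) ->
  step c (a, b) = Some (update c a b rest ((k, ~~ col) :: c b), k).
Proof.
move=> neq_ab ca; rewrite /step (negbTE neq_ab) ca.
by case: (c b) => [|[d r] s] //= /andP[-> /eqP ->]; case: col {ca}.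
Qed.

Lemma run_cons c m ms c1 d c2 ds :
  step c m = Some (c1, d) -> run c1 ms = Some (c2, ds) ->
  run c (m :: ms) = Some (c2, d :: ds).
Proof. by move=> /= -> ->. Qed.

Lemma run_cat c ms1 ms2 c1 ds1 c2 ds2 :
  run c ms1 = Some (c1, ds1) -> run c1 ms2 = Some (c2, ds2) ->
  run c (ms1 ++ ms2) = Some (c2, ds1 ++ ds2).
Proof.
elim: ms1 c ds1 => [|m ms IH] c ds1 /=; first by case=> -> <-.
case: (step c m) => [[c' d]|] //; case E: (run c' ms) => [[cf ds]|] // [Ecf <-] R2; subst cf.
by rewrite (IH _ _ E R2).
Qed.

(* Move counts of the tower k .. k + n - 1 when its disk at height i (the
   bottom disk k has height 0) moves f i times. *)
Definition profile (f : nat -> nat) (k n d : nat) : nat :=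
  if k <= d < k + n then f (d - k) else 0.

Lemma profile0 f k d : profile f k 0 d = 0.
Proof. by rewrite /profile; case: ifP => //; lia. Qed.

Lemma profileS f k n d :
  profile f k n.+1 d = (d == k) * f 0 + profile (fun i => f i.+1) k.+1 n d.
Proof.
rewrite /profile; case: (ltngtP d k) => [//|lt_kd|->] /=.
- by rewrite addSnnS; case: ifP => // _; congr f; lia.
- by rewrite subnn addnS ltnS leq_addr mul1n addn0.
Qed.

Lemma eq_profile f g k n d : f =1 g -> profile f k n d = profile g k n d.
Proof. by move=> eq_fg; rewrite /profile eq_fg. Qed.

Lemma profileD f g k n d :
  profile (fun i => f i + g i) k n d = profile f k n d + profile g k n d.
Proof. by rewrite /profile; case: ifP. Qed.

Lemma profileZ c f k n d : profile (fun i => c * f i) k n d = c * profile f k n d.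
Proof. by rewrite /profile; case: ifP; rewrite ?muln0. Qed.

Lemma profile_pow3S k n d :
  profile (expn 3) k n.+1 d = (d == k) + 3 * profile (expn 3) k.+1 n d.
Proof. by rewrite profileS muln1 -profileZ (eq_profile _ _ _ (fun i => expnS 3 i)). Qed.

Lemma neq_sym (x y : 'I_3) : x != y -> y != x.
Proof. by rewrite eq_sym. Qed.
Local Hint Extern 0 (is_true (_ != _)) => (apply: neq_sym; assumption) : core.

Fixpoint hanoi_ends n a b m : seq move :=
  if n is n'.+1 then
    hanoi_ends n' a b m ++ (a, m) :: hanoi_ends n' b a m ++ (m, b) :: hanoi_ends n' a b m
  else [::].

Fixpoint hanoi_to_mid n a m b : seq move :=
  if n is n'.+1 then hanoi_ends n' a b m ++ (a, m) :: hanoi_to_mid n' b m a else [::].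

Fixpoint hanoi_from_mid n m a b : seq move :=
  if n is n'.+1 then hanoi_from_mid n' m b a ++ (m, a) :: hanoi_ends n' b a m else [::].

Definition park n X Y Z : seq move :=
  if n is n'.+1 then
    hanoi_from_mid n' X Z Y ++ (X, Y) :: hanoi_to_mid n' Z X Y ++ (Y, Z) :: hanoi_ends n' X Z Y
  else [::].

Fixpoint solution n X Y Z : seq move :=
  if n is n'.+1 then park n' X Y Z ++ (X, Y) :: solution n' Z Y X else [::].

Lemma hanoi_ends_spec n k col (a b m : 'I_3) (c : config) base :
  a != b -> b != m -> a != m ->
  c a = tower k n col ++ base -> landable k col base ->
  landable k col (c b) -> landable k (~~ col) (c m) ->
  exists c' ds, run c (hanoi_ends n a b m) = Some (c', ds) /\
    [/\ c' a = base, c' b = tower k n col ++ c b, c' m = c m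
      & forall d, count_mem d ds = 2 * profile (expn 3) k n d].
Proof.
elim: n k col a b m c base => [|n IH] k col a b m c base ab bm am ca l_base l_b l_m.
  by exists c, [::]; split=> //; split=> // d; rewrite profile0.
rewrite towerS -catA /= in ca.
have [c1 [ds1 [R1 [c1a c1b c1m C1]]]] := IH k.+1 col a b m c _ ab bm am ca
  (landable_cons _ _ _) (landableS l_b) (landableS l_m).
have := step_top am c1a; rewrite c1m => /(_ l_m) S2.
set c2 := update _ _ _ _ _ in S2.
have c2a : c2 a = base by rewrite /c2 update_src.
have c2b : c2 b = tower k.+1 n col ++ c b by rewrite /c2 update_other.
have c2m : c2 m = (k, ~~ col) :: c m by rewrite /c2 update_dst.
have := IH k.+1 col b a m c2 (c b) (neq_sym ab) am bm c2b (landableS l_b).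
rewrite c2a c2m => /(_ (landableS l_base) (landable_cons _ _ _)) [c3 [ds3 [R3 [c3b c3a c3m C3]]]].
have := step_top (neq_sym bm) c3m; rewrite c3b negbK => /(_ l_b) S4.
set c4 := update _ _ _ _ _ in S4.
have c4a : c4 a = tower k.+1 n col ++ base by rewrite /c4 update_other.
have c4b : c4 b = (k, col) :: c b by rewrite /c4 update_dst.
have c4m : c4 m = c m by rewrite /c4 update_src.
have := IH k.+1 col a b m c4 base ab bm am c4a (landableS l_base).
rewrite c4b c4m => /(_ (landable_cons _ _ _) (landableS l_m)) [c5 [ds5 [R5 [c5a c5b c5m C5]]]].
exists c5, (ds1 ++ k :: ds3 ++ k :: ds5); split.
  exact: run_cat R1 (run_cons S2 (run_cat R3 (run_cons S4 R5))).
split=> [||| d] //.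
- by rewrite c5b towerS -catA.
- by rewrite !count_cat /= !count_cat /= C1 C3 C5 profile_pow3S; lia.
Qed.

Lemma hanoi_to_mid_spec n k col (a m b : 'I_3) (c : config) base :
  a != m -> m != b -> a != b ->
  c a = tower k n col ++ base -> landable k col base ->
  landable k (~~ col) (c m) -> landable k col (c b) ->
  exists c' ds, run c (hanoi_to_mid n a m b) = Some (c', ds) /\
    [/\ c' a = base, c' m = tower k n (~~ col) ++ c m, c' b = c b
      & forall d, count_mem d ds = profile (expn 3) k n d].
Proof.
elim: n k col a m b c base => [|n IH] k col a m b c base am mb ab ca l_base l_m l_b.
  by exists c, [::]; split=> //; split=> // d; rewrite profile0.
rewrite towerS -catA /= in ca.
have [c1 [ds1 [R1 [c1a c1b c1m C1]]]] := hanoi_ends_spec ab (neq_sym mb) am ca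
  (landable_cons _ _ _) (landableS l_b) (landableS l_m).
have := step_top am c1a; rewrite c1m => /(_ l_m) S2.
set c2 := update _ _ _ _ _ in S2.
have c2a : c2 a = base by rewrite /c2 update_src.
have c2b : c2 b = tower k.+1 n col ++ c b by rewrite /c2 update_other.
have c2m : c2 m = (k, ~~ col) :: c m by rewrite /c2 update_dst.
have := IH k.+1 col b m a c2 (c b) (neq_sym mb) (neq_sym am) (neq_sym ab) c2b (landableS l_b).
rewrite c2a c2m => /(_ (landable_cons _ _ _) (landableS l_base)) [c3 [ds3 [R3 [c3b c3m c3a C3]]]].
exists c3, (ds1 ++ k :: ds3); split; first exact: run_cat R1 (run_cons S2 R3).
split=> [||| d] //.
- by rewrite c3m towerS -catA.
- by rewrite !count_cat /= C1 C3 profile_pow3S; lia.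
Qed.

Lemma hanoi_from_mid_spec n k col (m a b : 'I_3) (c : config) base :
  m != a -> a != b -> m != b ->
  c m = tower k n col ++ base -> landable k col base ->
  landable k (~~ col) (c a) -> landable k (~~ col) (c b) ->
  exists c' ds, run c (hanoi_from_mid n m a b) = Some (c', ds) /\
    [/\ c' m = base, c' a = tower k n (~~ col) ++ c a, c' b = c b
      & forall d, count_mem d ds = profile (expn 3) k n d].
Proof.
elim: n k col m a b c base => [|n IH] k col m a b c base ma ab mb cm l_base l_a l_b.
  by exists c, [::]; split=> //; split=> // d; rewrite profile0.
rewrite towerS -catA /= in cm.
have [c1 [ds1 [R1 [c1m c1b c1a C1]]]] := IH k.+1 col m b a c _ mb (neq_sym ab) ma cm
  (landable_cons _ _ _) (landableS l_b) (landableS l_a).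
have := step_top ma c1m; rewrite c1a => /(_ l_a) S2.
set c2 := update _ _ _ _ _ in S2.
have c2m : c2 m = base by rewrite /c2 update_src.
have c2a : c2 a = (k, ~~ col) :: c a by rewrite /c2 update_dst.
have c2b : c2 b = tower k.+1 n (~~ col) ++ c b by rewrite /c2 update_other.
have := hanoi_ends_spec (neq_sym ab) (neq_sym ma) (neq_sym mb) c2b (landableS l_b).
rewrite c2a c2m negbK => /(_ (landable_cons _ _ _) (landableS l_base)).
case=> [c3 [ds3 [R3 [c3b c3a c3m C3]]]].
exists c3, (ds1 ++ k :: ds3); split; first exact: run_cat R1 (run_cons S2 R3).
split=> [||| d] //.
- by rewrite c3a towerS -catA.
- by rewrite !count_cat /= C1 C3 profile_pow3S; lia.
Qed.

Definition park_count (i : nat) : nat := if i is j.+1 then 4 * 3 ^ j else 2.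

Definition solve_count (i : nat) : nat := if i is j.+1 then 2 * 3 ^ j + 1 else 1.

Lemma profile_park_countS k n d :
  profile park_count k n.+1 d = 2 * (d == k) + 4 * profile (expn 3) k.+1 n d.
Proof. by rewrite profileS -profileZ mulnC. Qed.

Lemma profile_solve_countS k n d :
  profile solve_count k n.+1 d =
    (d == k) + profile park_count k.+1 n d + profile solve_count k.+1 n d.
Proof.
rewrite profileS muln1 -addnA -profileD; congr (_ + _).
by apply: eq_profile => -[|i] /=; rewrite ?expn0 ?expnS; lia.
Qed.

Lemma park_spec n k col (X Y Z : 'I_3) (c : config) base :
  X != Y -> Y != Z -> X != Z ->
  c X = tower k n col ++ base -> landable k col base ->
  landable k (~~ col) (c Y) -> c Z = [::] ->
  exists c' ds, run c (park n X Y Z) = Some (c', ds) /\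
    [/\ c' X = base, c' Y = c Y, c' Z = tower k n col
      & forall d, count_mem d ds = profile park_count k n d].
Proof.
move=> XY YZ XZ cX l_base l_Y cZ; case: n cX => [|n] cX.
  by exists c, [::]; split=> //; split=> // d; rewrite profile0.
rewrite towerS -catA /= in cX.
have := hanoi_from_mid_spec XZ (neq_sym YZ) XY cX (landable_cons _ _ _).
rewrite cZ cats0 => /(_ isT (landableS l_Y)) [c1 [ds1 [R1 [c1X c1Z c1Y C1]]]].
have := step_top XY c1X; rewrite c1Y => /(_ l_Y) S2.
set c2 := update _ _ _ _ _ in S2.
have c2X : c2 X = base by rewrite /c2 update_src.
have c2Y : c2 Y = (k, ~~ col) :: c Y by rewrite /c2 update_dst.
have c2Z : c2 Z = tower k.+1 n (~~ col) ++ [::] by rewrite /c2 update_other // cats0.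
have := hanoi_to_mid_spec (neq_sym XZ) XY (neq_sym YZ) c2Z isT.
rewrite c2X c2Y negbK => /(_ (landableS l_base) (landable_cons _ _ _)).
case=> [c3 [ds3 [R3 [c3Z c3X c3Y C3]]]].
have := step_top YZ c3Y; rewrite c3Z negbK => /(_ isT) S4.
set c4 := update _ _ _ _ _ in S4.
have c4X : c4 X = tower k.+1 n col ++ base by rewrite /c4 update_other.
have c4Y : c4 Y = c Y by rewrite /c4 update_src.
have c4Z : c4 Z = [:: (k, col)] by rewrite /c4 update_dst.
have := hanoi_ends_spec XZ (neq_sym YZ) XY c4X (landableS l_base).
rewrite c4Z c4Y => /(_ (landable_cons _ _ _) (landableS l_Y)) [c5 [ds5 [R5 [c5X c5Z c5Y C5]]]].
exists c5, (ds1 ++ k :: ds3 ++ k :: ds5); split.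
  exact: run_cat R1 (run_cons S2 (run_cat R3 (run_cons S4 R5))).
split=> [||| d] //.
- by rewrite c5Z towerS.
- by rewrite !count_cat /= !count_cat /= C1 C3 C5 profile_park_countS; lia.
Qed.

Lemma solution_spec n k col (X Y Z : 'I_3) (c : config) :
  X != Y -> Y != Z -> X != Z ->
  c X = tower k n col -> landable k (~~ col) (c Y) -> c Z = [::] ->
  exists c' ds, run c (solution n X Y Z) = Some (c', ds) /\
    [/\ c' X = [::], c' Y = tower k n (~~ col) ++ c Y, c' Z = [::]
      & forall d, count_mem d ds = profile solve_count k n d].
Proof.
elim: n k col X Y Z c => [|n IH] k col X Y Z c XY YZ XZ cX l_Y cZ.
  by exists c, [::]; split=> //; split=> // d; rewrite profile0.
rewrite towerS in cX.
have [c1 [ds1 [R1 [c1X c1Y c1Z C1]]]] := park_spec XY YZ XZ cX (landable_cons _ _ _)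
  (landableS l_Y) cZ.
have := step_top XY c1X; rewrite c1Y => /(_ l_Y) S2.
set c2 := update _ _ _ _ _ in S2.
have c2X : c2 X = [::] by rewrite /c2 update_src.
have c2Y : c2 Y = (k, ~~ col) :: c Y by rewrite /c2 update_dst.
have c2Z : c2 Z = tower k.+1 n col by rewrite /c2 update_other.
have := IH k.+1 col Z Y X c2 (neq_sym YZ) (neq_sym XY) (neq_sym XZ) c2Z.
rewrite c2Y => /(_ (landable_cons _ _ _) c2X) [c3 [ds3 [R3 [c3Z c3Y c3X C3]]]].
exists c3, (ds1 ++ k :: ds3); split; first exact: run_cat R1 (run_cons S2 R3).
split=> [||| d] //.
- by rewrite c3Y towerS -catA.
- by rewrite !count_cat /= C1 C3 profile_solve_countS; lia.
Qed.

Lemma size_hanoi_ends n a b m : (size (hanoi_ends n a b m)).+1 = 3 ^ n.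
Proof.
elim: n a b m => [|n IH] a b m //=; rewrite !size_cat /= size_cat /= expnS.
by have := IH a b m; have := IH b a m; lia.
Qed.

Lemma size_hanoi_to_mid n a m b : 2 * size (hanoi_to_mid n a m b) + 1 = 3 ^ n.
Proof.
elim: n a m b => [|n IH] a m b //=; rewrite size_cat /= expnS.
by have := IH b m a; have := size_hanoi_ends n a b m; lia.
Qed.

Lemma size_hanoi_from_mid n m a b : 2 * size (hanoi_from_mid n m a b) + 1 = 3 ^ n.
Proof.
elim: n m a b => [|n IH] m a b //=; rewrite size_cat /= expnS.
by have := IH m b a; have := size_hanoi_ends n b a m; lia.
Qed.

Lemma size_park n X Y Z : size (park n.+1 X Y Z) = 2 * 3 ^ n.
Proof.
rewrite /= !size_cat /= size_cat /=.
have := size_hanoi_from_mid n X Z Y; have := size_hanoi_to_mid n Z X Y.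
by have := size_hanoi_ends n X Z Y; lia.
Qed.

Lemma size_solution n X Y Z : size (solution n.+1 X Y Z) = 3 ^ n + n.
Proof.
elim: n X Y Z => [|n IH] X Y Z //.
by rewrite /= size_cat /= IH size_park expnS; lia.
Qed.

Lemma map_fst_tower k n col : map fst (tower k n col) = rev (iota k n).
Proof. by rewrite /tower -map_comp map_id. Qed.

Lemma third_post (S D : 'I_3) : S != D ->
  exists X : 'I_3, [/\ X != S, X != D & forall x : 'I_3, [|| x == S, x == D | x == X]].
Proof.
case: S D => [[|[|[|?]]] ?] [[|[|[|?]]] ?] //= _;
  [exists (@Ordinal 3 2 isT) | exists (@Ordinal 3 1 isT) | exists (@Ordinal 3 2 isT)
  | exists (@Ordinal 3 0 isT) | exists (@Ordinal 3 1 isT) | exists (@Ordinal 3 0 isT)];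
  by split=> // -[[|[|[|?]]] ?].
Qed.

Lemma quadratic_le_expn3 M : 2 * M * M + 1 <= 3 ^ M.
Proof.
elim: M => [|M IH] //; rewrite expnS.
have : M <= M * M by case: M {IH} => // M; nia.
lia.
Qed.

Section Limit.
Local Open Scope R_scope.

Lemma Un_cv_inv_bound (u : nat -> R) (l : R) :
  (forall n, Rabs (u n.+1 - l) <= / INR n.+1) -> Un_cv u l.
Proof.
move=> bound eps eps_gt0; have [N [lt_invN_eps N_gt0]] := archimed_cor1 eps eps_gt0.
exists N => -[|n] le_Nn; first lia.
apply: Rle_lt_trans (bound n) (Rle_lt_trans _ _ _ _ lt_invN_eps).
by apply: Rinv_le_contravar; [exact: lt_0_INR | exact: le_INR].
Qed.

Lemma ratio_error_bound (x m : R) : 0 <= m -> 2 * m * m + 1 <= x ->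
  Rabs ((x + m) / ((3 * x - 1) / 2) - 2 / 3) <= / (m + 1).
Proof.
move=> m_ge0 quad.
have -> : (x + m) / ((3 * x - 1) / 2) - 2 / 3 = (6 * m + 2) / (3 * (3 * x - 1))
  by field; nra.
rewrite Rabs_pos_eq; last by apply: Rmult_le_pos; [lra | apply/Rlt_le/Rinv_0_lt_compat; nra].
apply: (Rmult_le_reg_r (3 * (3 * x - 1) * (m + 1))); first nra.
rewrite /Rdiv; field_simplify; nra.
Qed.

Lemma S67_ratio_error M :
  Rabs (INR (S67 M.+1) / ((INR (3 ^ M.+1) - INR 1) / INR 2) - INR 2 / INR 3) <= / INR M.+1.
Proof.
have -> : S67 M.+1 = (3 ^ M + M)%N by rewrite /S67 (subn1 M.+1) /=; lia.
have quad : 2 * INR M * INR M + 1 <= INR (3 ^ M).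
  move: (quadratic_le_expn3 M) => /leP /le_INR.
  by rewrite plus_INR !mult_INR; replace (INR 2) with 2 by (simpl; lra).
rewrite expnS (S_INR M) mult_INR plus_INR.
replace (INR 1) with 1 by reflexivity; replace (INR 2) with 2 by (simpl; lra).
replace (INR 3) with 3 by (simpl; lra).
exact: ratio_error_bound (pos_INR M) quad.
Qed.
End Limit.

Theorem mainTheorem2 :
  (forall (N : nat), 1 <= N -> forall S D : 'I_3, S != D ->
     exists (ms : seq move) (cf : config) (ds : seq nat),
       run (init N S) ms = Some (cf, ds) /\ solved N D cf /\
       size ms = S67 N /\
       count_mem 1 ds = 1 /\
       (forall k, 2 <= k <= N -> count_mem k ds = 2 * 3 ^ (k - 2) + 1)) /\
  Un_cv (fun N : nat => Rdiv (INR (S67 N)) (Rdiv (Rminus (INR (3 ^ N)) (INR 1)) (INR 2)))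
        (Rdiv (INR 2) (INR 3)).
Proof.
split; last by apply: Un_cv_inv_bound => M; exact: S67_ratio_error.
move=> N N_ge1 S D SD; have [X [XS XD posts]] := third_post SD.
have initS : init N S S = tower 1 N true by rewrite /init eqxx.
have initD : init N S D = [::] by rewrite /init (negbTE (neq_sym SD)).
have initX : init N S X = [::] by rewrite /init (negbTE XS).
have := solution_spec SD (neq_sym XD) (neq_sym XS) initS.
rewrite initD => /(_ isT initX) [cf [ds [R [cfS cfD cfX C]]]].
exists (solution N S D X), cf, ds; split; first exact: R.
split; [split|split; [|split]].
- by rewrite cfD cats0 map_fst_tower.
- by move=> x; case/or3P: (posts x) => /eqP -> //; rewrite eqxx.
- by rewrite -(prednK N_ge1) size_solution /S67 (subn1 N.-1.+1) /=; lia.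
- by rewrite C /profile ifT ?subnn //; lia.
- move=> k /andP[k_ge2 k_leN]; rewrite C /profile ifT; last by lia.
  by have -> : k - 1 = (k - 2).+1 by lia.
Qed.
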